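(* Let $\mathcal X=\{X_1,\dots,X_n\}$, $n\in\mathbb N$, be a multi-set of real symmetric $2\times2$ matrices, and let $\lambda_1$ be the unique largest eigenvalue of all matrices of $\mathcal X$, belonging to $X_1$, with normalised eigenvector $u_1$. Then the log-exp-supremum of $\mathcal X$ has the representation $$S=\lim_{m\to\infty}\frac1m\log\sum_{i=1}^n\exp(mX_i)=\lambda_1u_1u_1^{\mathsf T}+\mu_*v_1v_1^{\mathsf T},$$ where $v_1$ is the normalised vector perpendicular to $u_1$ and $\mu_*$ is the largest eigenvalue of $\mathcal X$ (other than the occurrence $\lambda_1$) whose associated normalised eigenvector is not aligned with $u_1$.
   Context: $\exp$ and $\log$ denote the matrix exponential and matrix logarithm. Every real symmetric $2\times2$ matrix $X_i$ is written in spectral form $X_i=\lambda_i u_iu_i^{\mathsf T}+\mu_i v_iv_i^{\mathsf T}$ with $\lambda_i\ge\mu_i$, $u_i=(\cos\varphi_i,\sin\varphi_i)^{\mathsf T}$, $v_i=(-\sin\varphi_i,\cos\varphi_i)^{\mathsf T}$, $\varphi_i\in[-\pi/2,\pi/2]$. ''The eigenvalues of $\mathcal X$'' means the multi-set of all $2n$ numbers $\lambda_1,\mu_1,\dots,\lambda_n,\mu_n$, each with its associated eigenvector ($u_i$ for $\lambda_i$, $v_i$ for $\mu_i$); an eigenvalue is unique if it occurs exactly once in this multi-set. Two unit vectors are aligned if they are equal up to sign. The log-exp-supremum (LES) of $\mathcal X$ is $\mathrm{Sup}_{\mathrm{LE}}(\mathcal X):=\lim_{m\to\infty}\frac1m\log\sum_{i=1}^n\exp(mX_i)$.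 *)

From HB Require Import structures.
From mathcomp Require Import all_boot all_order all_algebra.
From mathcomp Require Import all_classical all_reals all_analysis.
Set Implicit Arguments. Unset Strict Implicit. Unset Printing Implicit Defensive.
Import Order.TTheory GRing.Theory Num.Theory.
Import numFieldNormedType.Exports.
Local Open Scope classical_set_scope.
Local Open Scope ring_scope.

Definition mexp {R : realType} (A : 'M[R]_2) : 'M[R]_2 :=
  lim ((fun N : nat => \sum_(k < N) ((k`!)%:R^-1 *: A ^+ k)) @ \oo).

(* Matrix logarithm (of a symmetric positive definite matrix): the unique
   real symmetric matrix L with exp L = B (chosen by xget; 0 if none). *)
Definition mlog {R : realType} (B : 'M[R]_2) : 'M[R]_2 :=
  xget 0 [set L : 'M[R]_2 | L^T = L /\ mexp L = B].

Definition vec2 {R : realType} (a b : R) : 'cV[R]_2 :=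
  \col_(i < 2) (if (i : nat) == 0%N then a else b).

Definition uvec {R : realType} (phi : R) : 'cV[R]_2 := vec2 (cos phi) (sin phi).
Definition vvec {R : realType} (phi : R) : 'cV[R]_2 := vec2 (- sin phi) (cos phi).

Definition spectral {R : realType} (lam mu phi : R) : 'M[R]_2 :=
  lam *: (uvec phi *m (uvec phi)^T) + mu *: (vvec phi *m (vvec phi)^T).

Definition aligned {R : realType} (x y : 'cV[R]_2) : Prop := x = y \/ x = - y.

(* The multiset of eigenvalues of X = {X_0,...,X_n}: indexed by (i, b),
   b = true for lambda_i (eigenvector u_i), b = false for mu_i (eigenvector v_i). *)
Definition eigval {R : realType} {n : nat} (lam mu : 'I_n -> R)
  (k : 'I_n * bool) : R := if k.2 then lam k.1 else mu k.1.
Definition eigvec {R : realType} {n : nat} (phi : 'I_n -> R)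
  (k : 'I_n * bool) : 'cV[R]_2 := if k.2 then uvec (phi k.1) else vvec (phi k.1).

(* The set is
   nonempty since it contains (ord0, false) (v_1 is perpendicular to u_1),
   so taking mu_1 as the initial value of the max is harmless. *)
Definition mu_star {R : realType} {n : nat} (lam mu phi : 'I_n.+1 -> R) : R :=
  \big[Num.max/mu ord0]_(k : 'I_n.+1 * bool |
      (k != (ord0, true)) && ~~ `[< aligned (eigvec phi k) (uvec (phi ord0)) >])
    eigval lam mu k.

From HB Require Import structures.
From mathcomp Require Import all_boot all_order all_algebra.
From mathcomp Require Import all_classical all_reals all_analysis.
From mathcomp Require Import ring lra.
Import Order.TTheory GRing.Theory Num.Theory.
Import numFieldNormedType.Exports.
Local Open Scope classical_set_scope.
Local Open Scope ring_scope.
Set Implicit Arguments. Unset Strict Implicit. Unset Printing Implicit Defensive.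

(* Over all eigenpairs (nu_k, w_k) of the X_i, S_m := sum_i exp(m X_i) = sum_k e^(m nu_k) w_k w_k^T.
   Since lambda_1 is the unique largest eigenvalue, e^(-m lambda_1) S_m -> u_1 u_1^T, so the top
   eigenvalue of S_m grows like e^(m lambda_1) and its eigenprojector tends to u_1 u_1^T.
   By Cauchy-Binet, det S_m = 1/2 sum_(k,l) e^(m (nu_k + nu_l)) (w_k x w_l)^2, and a pair with
   nonzero cross product cannot have both vectors aligned with u_1, so the dominant exponent is
   lambda_1 + mu_star: the bottom eigenvalue det S_m / s_1 grows like e^(m mu_star).  Writing
   (1/m) log S_m = (1/m) log s_1 P_m + (1/m) log s_2 (1 - P_m) gives the limit. *)

Section Mx22.
Variable R : comNzRingType.

Definition mx22 (a b c d : R) : 'M[R]_2 :=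
  \matrix_(i < 2, j < 2) if i == 0 then (if j == 0 then a else b)
                         else (if j == 0 then c else d).

Lemma ord2P (i : 'I_2) : i = 0 \/ i = 1.
Proof. by case: i => [[|[|?]] ?] //; [left | right]; apply: val_inj. Qed.

Lemma mx22E (M : 'M[R]_2) : M = mx22 (M 0 0) (M 0 1) (M 1 0) (M 1 1).
Proof.
apply/matrixP => i j; rewrite mxE.
by case: i => [[|[|?]] ?] //; case: j => [[|[|?]] ?] //=; congr (M _ _); exact: val_inj.
Qed.

Lemma sym_mx22E (M : 'M[R]_2) : M^T = M -> M = mx22 (M 0 0) (M 0 1) (M 0 1) (M 1 1).
Proof. by move/matrixP/(_ 0 1); rewrite mxE => e; rewrite {1}[M]mx22E e. Qed.

Lemma mx22_1 : 1 = mx22 1 0 0 1.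
Proof. by apply/matrixP => i j; rewrite !mxE; case: i => [[|[|?]] ?]; case: j => [[|[|?]] ?]. Qed.

Lemma mx22D a b c d a' b' c' d' :
  mx22 a b c d + mx22 a' b' c' d' = mx22 (a + a') (b + b') (c + c') (d + d').
Proof. by apply/matrixP => i j; rewrite !mxE; case: ifP; case: ifP. Qed.

Lemma mx22N a b c d : - mx22 a b c d = mx22 (- a) (- b) (- c) (- d).
Proof. by apply/matrixP => i j; rewrite !mxE; case: ifP; case: ifP. Qed.

Lemma mx22Z k a b c d : k *: mx22 a b c d = mx22 (k * a) (k * b) (k * c) (k * d).
Proof. by apply/matrixP => i j; rewrite !mxE; case: ifP; case: ifP. Qed.

Lemma mul_mx22 a b c d a' b' c' d' :
  mx22 a b c d * mx22 a' b' c' d' =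
  mx22 (a * a' + b * c') (a * b' + b * d') (c * a' + d * c') (c * b' + d * d').
Proof.
apply/matrixP => i j; rewrite -mulmxE !mxE !big_ord_recl big_ord0 !mxE /= addr0.
by case: ifP; case: ifP.
Qed.

Lemma mx22_inj a b c d a' b' c' d' :
  mx22 a b c d = mx22 a' b' c' d' -> [/\ a = a', b = b', c = c' & d = d'].
Proof.
by move/matrixP=> e; move: (e 0 0) (e 0 1) (e 1 0) (e 1 1); rewrite !mxE.
Qed.

Lemma det_mx22 a b c d : \det (mx22 a b c d) = a * d - b * c.
Proof.
rewrite (expand_det_row _ 0) !big_ord_recl big_ord0 /cofactor !det_mx11 !mxE /=.
by rewrite expr0 expr1 mul1r mulN1r addr0 mulrN.
Qed.

Lemma mxtrace_mx22 a b c d : \tr (mx22 a b c d) = a + d.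
Proof. by rewrite /mxtrace !big_ord_recl big_ord0 !mxE /= addr0. Qed.

Lemma mxtrace2 (M : 'M[R]_2) : \tr M = M 0 0 + M 1 1.
Proof. by rewrite {1}[M]mx22E mxtrace_mx22. Qed.

Lemma det2 (M : 'M[R]_2) : \det M = M 0 0 * M 1 1 - M 0 1 * M 1 0.
Proof. by rewrite {1}[M]mx22E det_mx22. Qed.

Lemma outer_mx22 (x : 'cV[R]_2) :
  x *m x^T = mx22 (x 0 0 * x 0 0) (x 0 0 * x 1 0) (x 1 0 * x 0 0) (x 1 0 * x 1 0).
Proof.
apply/matrixP => i j; rewrite !mxE big_ord1 !mxE.
by case: i => [[|[|?]] ?]; case: j => [[|[|?]] ?] //=; congr (x _ _ * x _ _); exact: val_inj.
Qed.

End Mx22.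

Section SymEigen.
Variable R : rcfType.
Implicit Types (M P : 'M[R]_2) (a b c k x y : R).

Definition eig_gap M : R := Num.sqrt ((M 0 0 - M 1 1) ^+ 2 + 4 * M 0 1 ^+ 2).
Definition eig_max M : R := (\tr M + eig_gap M) / 2.
Definition eig_min M : R := (\tr M - eig_gap M) / 2.
(* The projector onto the top eigenspace; it is [0] when [M] is scalar, since [0^-1 = 0]. *)
Definition eigproj M : 'M[R]_2 := (eig_gap M)^-1 *: (M - eig_min M *: 1).

Lemma eig_gap_mx22 a b c c' : eig_gap (mx22 a c c' b) = Num.sqrt ((a - b) ^+ 2 + 4 * c ^+ 2).
Proof. by rewrite /eig_gap !mxE. Qed.

Lemma eig_gap_ge0 M : 0 <= eig_gap M.
Proof. exact: sqrtr_ge0. Qed.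

Lemma sqr_eig_gap M : eig_gap M ^+ 2 = (M 0 0 - M 1 1) ^+ 2 + 4 * M 0 1 ^+ 2.
Proof. by rewrite sqr_sqrtr // addr_ge0 ?sqr_ge0 // mulr_ge0 ?sqr_ge0. Qed.

Lemma eig_maxB_min M : eig_max M - eig_min M = eig_gap M.
Proof. by rewrite /eig_max /eig_min; field. Qed.

Lemma eig_min_le_max M : eig_min M <= eig_max M.
Proof. by rewrite -subr_ge0 eig_maxB_min eig_gap_ge0. Qed.

Lemma mulr_eig_max_min M : M^T = M -> eig_max M * eig_min M = \det M.
Proof.
move=> /sym_mx22E ->; rewrite /eig_max /eig_min mxtrace_mx22 det_mx22 eig_gap_mx22.
move: (M 0 0) (M 0 1) (M 1 1) => a c b; set g := Num.sqrt _.
have -> : (a + b + g) / 2 * ((a + b - g) / 2) = ((a + b) ^+ 2 - g ^+ 2) / 4 by field.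
rewrite sqr_sqrtr; first by field.
by rewrite addr_ge0 ?sqr_ge0 // mulr_ge0 ?sqr_ge0.
Qed.

Lemma eig_min_gt0 M : M^T = M -> 0 < \tr M -> 0 < \det M -> 0 < eig_min M.
Proof.
move=> hM htr hdet; have hmax : 0 < eig_max M.
  by rewrite /eig_max divr_gt0 // ltr_wpDr ?eig_gap_ge0.
by rewrite -(pmulr_rgt0 _ hmax) mulr_eig_max_min.
Qed.

Lemma sym_scalar_of_gap0 M : M^T = M -> eig_gap M = 0 -> M = eig_min M *: 1.
Proof.
move=> /sym_mx22E -> g0; rewrite /eig_min g0 subr0 mxtrace_mx22.
move/eqP: g0; rewrite eig_gap_mx22 sqrtr_eq0; move: (M 0 0) (M 0 1) (M 1 1) => a c b hD.
have /eqP : (a - b) ^+ 2 = 0.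
  by apply/eqP; rewrite eq_le sqr_ge0 andbT; move: (sqr_ge0 c); lra.
have /eqP : c ^+ 2 = 0.
  by apply/eqP; rewrite eq_le sqr_ge0 andbT; move: (sqr_ge0 (a - b)); lra.
rewrite !sqrf_eq0 subr_eq0 => /eqP -> /eqP ->.
by rewrite mx22_1 mx22Z; congr mx22; field.
Qed.

Lemma eigproj_gap0 M : eig_gap M = 0 -> eigproj M = 0.
Proof. by rewrite /eigproj => ->; rewrite invr0 scale0r. Qed.

Lemma eig_gap_scalar a : eig_gap (a *: 1) = 0.
Proof. by rewrite mx22_1 mx22Z eig_gap_mx22 !mulr0 subrr expr0n /= mulr0 addr0 sqrtr0. Qed.

Lemma eig_min_scalar a : eig_min (a *: 1) = a.
Proof. by rewrite /eig_min eig_gap_scalar mxtraceZ mxtrace1 subr0; field. Qed.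

(* Cayley--Hamilton: [(M - eig_max M) (M - eig_min M) = 0] and [eig_max M - eig_min M = eig_gap M]. *)
Lemma eig_min_shift_sqr M : M^T = M ->
  (M - eig_min M *: 1) * (M - eig_min M *: 1) = eig_gap M *: (M - eig_min M *: 1).
Proof.
move=> hM; have := sqr_eig_gap M; rewrite /eig_min.
move: (eig_gap M) => g; rewrite (sym_mx22E hM) mxtrace_mx22 !mxE /=.
move: (M 0 0) (M 0 1) (M 1 1) => a c b hg.
rewrite mx22_1 !mx22Z mx22N !mx22D mul_mx22 mx22Z; congr mx22; lra.
Qed.

Lemma eigproj_idem M : M^T = M -> eigproj M * eigproj M = eigproj M.
Proof.
move=> hM; rewrite /eigproj -scalerAl -scalerAr eig_min_shift_sqr // !scalerA.
have [->|g0] := eqVneq (eig_gap M) 0; first by rewrite invr0 !mul0r.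
by rewrite -mulrA mulVf ?mulr1.
Qed.

Lemma trmx_eigproj M : M^T = M -> (eigproj M)^T = eigproj M.
Proof. by move=> hM; rewrite /eigproj linearZ /= linearB /= hM linearZ /= trmx1. Qed.

Lemma mxtrace_eigproj M : eig_gap M != 0 -> \tr (eigproj M) = 1.
Proof.
move=> g0; rewrite /eigproj mxtraceZ raddfB /= mxtraceZ mxtrace1 /eig_min.
by field.
Qed.

Lemma sym_eig_decomp M : M^T = M ->
  M = eig_max M *: eigproj M + eig_min M *: (1 - eigproj M).
Proof.
move=> hM; rewrite scalerBr addrCA -scalerBl eig_maxB_min /eigproj scalerA.
have [g0|g0] := eqVneq (eig_gap M) 0.
  by rewrite g0 mul0r scale0r addr0 -sym_scalar_of_gap0.
by rewrite mulfV // scale1r addrC subrK.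
Qed.

Lemma eig_idem_comb P x y : P^T = P -> P * P = P -> \tr P = 1 -> y < x ->
  let M := x *: P + y *: (1 - P) in
  [/\ eig_max M = x, eig_min M = y & eigproj M = P].
Proof.
move=> hPt hPP trP yx M.
have M_shift : M - y *: 1 = (x - y) *: P.
  by apply/matrixP => i j; rewrite !mxE; ring.
have trM : \tr M = x + y.
  by rewrite /M raddfD /= !mxtraceZ raddfB /= mxtrace1 trP; ring.
have gapM : eig_gap M = x - y.
  move: hPP trP; rewrite /M (sym_mx22E hPt) mxtrace_mx22 mx22_1 mul_mx22 mx22N mx22D.
  rewrite !mx22Z mx22D eig_gap_mx22; move: (P 0 0) (P 0 1) (P 1 1) => p q r.
  move=> /mx22_inj [hp _ _ _] /(canRL (addKr p)) ->.
  have hq : q ^+ 2 = p - p ^+ 2 by rewrite !expr2; lra.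
  have xy : 0 <= x - y by rewrite subr_ge0 ltW.
  rewrite -(ger0_norm xy) -sqrtr_sqr.
  congr Num.sqrt; apply/eqP; rewrite -subr_eq0; apply/eqP.
  by transitivity (4 * (x - y) ^+ 2 * (q ^+ 2 - (p - p ^+ 2))); [ring | rewrite hq subrr mulr0].
have minM : eig_min M = y by rewrite /eig_min trM gapM; field.
split => //; first by rewrite /eig_max trM gapM; field.
by rewrite /eigproj gapM minM M_shift scalerA mulVf ?scale1r // subr_eq0 gt_eqF.
Qed.

Lemma eig_gapZ k M : 0 <= k -> eig_gap (k *: M) = k * eig_gap M.
Proof.
move=> k0; rewrite /eig_gap !mxE.
rewrite (_ : _ + _ = k ^+ 2 * ((M 0 0 - M 1 1) ^+ 2 + 4 * M 0 1 ^+ 2)); last by ring.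
by rewrite sqrtrM ?sqr_ge0 // sqrtr_sqr ger0_norm.
Qed.

Lemma eig_maxZ k M : 0 <= k -> eig_max (k *: M) = k * eig_max M.
Proof. by move=> k0; rewrite /eig_max eig_gapZ // mxtraceZ -mulrDr mulrA. Qed.

Lemma eig_minZ k M : 0 <= k -> eig_min (k *: M) = k * eig_min M.
Proof. by move=> k0; rewrite /eig_min eig_gapZ // mxtraceZ -mulrBr mulrA. Qed.

Lemma eigprojZ k M : 0 < k -> eigproj (k *: M) = eigproj M.
Proof.
move=> k0; rewrite /eigproj eig_gapZ ?eig_minZ ?ltW // -scalerA -scalerBr scalerA.
by rewrite invfM mulrAC mulVf ?gt_eqF // mul1r.
Qed.

End SymEigen.

Section SymEigenContinuity.
Variables (R : realType) (T : Type) (F : set_system T) (FF : Filter F).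
Variables (f : T -> 'M[R]_2) (M : 'M[R]_2).
Hypothesis f_cvg : f @ F --> M.

Let cvg_entry i j : (fun t => f t i j) @ F --> M i j.
Proof.
exact: (@continuous_cvg _ _ _ _ _ f (fun N : 'M[R]_2 => N i j) _ (@coord_continuous _ _ _ i j M)).
Qed.

Lemma cvg_mxtrace2 : (fun t => \tr (f t)) @ F --> \tr M.
Proof.
rewrite mxtrace2 (_ : (fun t => _) = fun t => f t 0 0 + f t 1 1).
  by apply: cvgD; exact: cvg_entry.
by apply/funext => t; rewrite mxtrace2.
Qed.

Lemma cvg_eig_gap : (fun t => eig_gap (f t)) @ F --> eig_gap M.
Proof.
apply: (@continuous_cvg _ _ _ _ _
  (fun t => (f t 0 0 - f t 1 1) ^+ 2 + 4 * f t 0 1 ^+ 2) Num.sqrt).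
  exact: sqrt_continuous.
apply: cvgD; [apply: cvgM; apply: cvgB | apply: cvgM; [exact: cvg_cst | apply: cvgM]];
  exact: cvg_entry.
Qed.

Lemma cvg_eig_max : (fun t => eig_max (f t)) @ F --> eig_max M.
Proof.
apply: cvgM; last exact: cvg_cst.
by apply: cvgD; [exact: cvg_mxtrace2 | exact: cvg_eig_gap].
Qed.

Lemma cvg_eigproj : eig_gap M != 0 -> (fun t => eigproj (f t)) @ F --> eigproj M.
Proof.
move=> g0; apply: cvgZ; first exact: cvgV cvg_eig_gap.
apply: cvgB => //; apply: cvgZ; last exact: cvg_cst.
by apply: cvgM; [apply: cvgB; [exact: cvg_mxtrace2 | exact: cvg_eig_gap] | exact: cvg_cst].
Qed.

End SymEigenContinuity.

Section MatrixExpLog.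
Variable R : realType.
Implicit Types (M L P : 'M[R]_2) (a b : R).

Lemma cvg_exp_series a :
  (fun N : nat => \sum_(k < N) (k`!%:R^-1 * a ^+ k)) @ \oo --> expR a.
Proof.
have -> : (fun N : nat => \sum_(k < N) (k`!%:R^-1 * a ^+ k)) = series (exp_coeff a).
  by apply/funext => N; rewrite /series /= big_mkord exp_coeffE.
rewrite expRE /= (_ : pseries _ a = series (exp_coeff a)).
  exact: is_cvg_series_exp_coeff.
by apply/funext => N; rewrite /pseries /series /= exp_coeffE.
Qed.

Lemma mexp_idem_comb P a b : P * P = P ->
  mexp (a *: P + b *: (1 - P)) = expR a *: P + expR b *: (1 - P).
Proof.
move=> PP; have QQ : (1 - P) * (1 - P) = 1 - P.
  by rewrite mulrBl !mulrBr !mul1r mulr1 PP subrr subr0.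
have PQ : P * (1 - P) = 0 by rewrite mulrBr mulr1 PP subrr.
have QP : (1 - P) * P = 0 by rewrite mulrBl mul1r PP subrr.
have pow k : (a *: P + b *: (1 - P)) ^+ k = a ^+ k *: P + b ^+ k *: (1 - P).
  elim: k => [|k IH]; first by rewrite !expr0 !scale1r addrC subrK.
  rewrite exprS IH mulrDl !mulrDr -!scalerAl -!scalerAr PP QQ PQ QP.
  by rewrite !scaler0 addr0 add0r !scalerA -!exprS.
rewrite /mexp (_ : (fun N => _) = fun N : nat =>
  (\sum_(k < N) (k`!%:R^-1 * a ^+ k)) *: P + (\sum_(k < N) (k`!%:R^-1 * b ^+ k)) *: (1 - P)).
  apply: cvg_lim => //; apply: cvgD; apply: cvgZ;
    by [exact: cvg_exp_series | exact: cvg_cst].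
apply/funext => N; rewrite !scaler_suml -big_split /=.
by apply: eq_bigr => k _; rewrite pow scalerDr !scalerA.
Qed.

Lemma mexp_sym M : M^T = M ->
  mexp M = expR (eig_max M) *: eigproj M + expR (eig_min M) *: (1 - eigproj M).
Proof. by move=> hM; rewrite {1}(sym_eig_decomp hM) mexp_idem_comb ?eigproj_idem. Qed.

Definition log_sym M : 'M[R]_2 :=
  ln (eig_max M) *: eigproj M + ln (eig_min M) *: (1 - eigproj M).

Lemma log_sym_mexp L : L^T = L -> log_sym (mexp L) = L.
Proof.
move=> hL; have [g0|g0] := eqVneq (eig_gap L) 0.
  rewrite [RHS](sym_scalar_of_gap0 hL g0) mexp_sym // eigproj_gap0 // scaler0 add0r subr0.
  by rewrite /log_sym eigproj_gap0 ?eig_gap_scalar // eig_min_scalar scaler0 add0r subr0 expRK.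
have lt_exp : expR (eig_min L) < expR (eig_max L).
  by rewrite ltr_expR -subr_gt0 eig_maxB_min lt_def g0 eig_gap_ge0.
rewrite mexp_sym // /log_sym.
have [-> -> ->] :=
  eig_idem_comb (trmx_eigproj hL) (eigproj_idem hL) (mxtrace_eigproj g0) lt_exp.
by rewrite !expRK -sym_eig_decomp.
Qed.

Lemma mlog_sym M : M^T = M -> 0 < eig_min M -> mlog M = log_sym M.
Proof.
move=> hM min_gt0; have max_gt0 : 0 < eig_max M.
  exact: lt_le_trans min_gt0 (eig_min_le_max M).
apply: xget_unique; last by move=> L [hL <-]; rewrite log_sym_mexp.
split; last by rewrite mexp_idem_comb ?eigproj_idem // !lnK ?posrE // -sym_eig_decomp.
rewrite /log_sym; move: (eigproj M) (trmx_eigproj hM) => P hP.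
by rewrite linearD /= !linearZ /= linearB /= trmx1 hP.
Qed.

End MatrixExpLog.

Section LogSumExp.
Variable R : realType.

Lemma cvg_invr_natr : (fun m : nat => (m%:R : R)^-1) @ \oo --> 0.
Proof.
apply/gtr0_cvgV0; last exact: cvgr_idn.
by near=> m; rewrite ltr0n; near: m; exists 1%N.
Unshelve. all: by end_near.
Qed.

Lemma cvg_invr_natrM (u : nat -> R) (l : R) :
  u @ \oo --> l -> (fun m : nat => m%:R^-1 * u m) @ \oo --> 0.
Proof. by move=> ul; rewrite -(mul0r l); apply: cvgM => //; exact: cvg_invr_natr. Qed.

Lemma invr_natrM_lnM_expR (m : nat) (c x : R) : (0 < m)%N -> 0 < x ->
  m%:R^-1 * ln (expR (m%:R * c) * x) = c + m%:R^-1 * ln x.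
Proof.
move=> m0 x0; rewrite lnM ?posrE ?expR_gt0 // expRK mulrDr mulrA mulVf ?mul1r //.
by rewrite pnatr_eq0 -lt0n.
Qed.

Lemma cvg_expR_natrM (c : R) : c < 0 -> (fun m : nat => expR (m%:R * c)) @ \oo --> 0.
Proof.
move=> c0; rewrite (_ : (fun m => _) = fun m => expR c ^+ m).
  by apply: cvg_expr; rewrite ger0_norm ?expR_ge0 // expR_lt1.
by apply/funext => m; rewrite expRM_natl.
Qed.

Lemma cvg_ln_sum_expR (J : finType) (a e : J -> R) (j0 : J) :
  (forall j, 0 <= a j) -> 0 < a j0 -> (forall j, 0 < a j -> e j <= e j0) ->
  (fun m : nat => m%:R^-1 * ln (\sum_j a j * expR (m%:R * e j))) @ \oo --> e j0.
Proof.
move=> a_ge0 a0_gt0 e_le.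
set A := \sum_j a j; set E := e j0.
have A_gt0 : 0 < A by rewrite (lt_le_trans a0_gt0) // /A (bigD1 j0) //= lerDl sumr_ge0.
have lower m : expR (m%:R * E) * a j0 <= \sum_j a j * expR (m%:R * e j).
  rewrite (bigD1 j0) //= mulrC lerDl sumr_ge0 // => j _.
  by rewrite mulr_ge0 ?expR_ge0.
have upper m : \sum_j a j * expR (m%:R * e j) <= expR (m%:R * E) * A.
  rewrite /A mulr_sumr; apply: ler_sum => j _; rewrite mulrC.
  have [->|aj0] := eqVneq (a j) 0; first by rewrite !mulr0.
  rewrite ler_pM2r ?lt_def ?aj0 ?a_ge0 // ler_expR ler_wpM2l //.
  by apply: e_le; rewrite lt_def aj0 a_ge0.
apply: (@squeeze_cvgr _ _ _ _ (fun m : nat => E + m%:R^-1 * ln (a j0))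
                              (fun m : nat => E + m%:R^-1 * ln A)).
- near=> m; have m0 : (0 < m)%N by near: m; exists 1%N.
  have mono x y : 0 < x -> x <= y -> m%:R^-1 * ln x <= m%:R^-1 * ln y.
    by move=> x0 xy; rewrite ler_wpM2l ?invr_ge0 // ler_ln ?posrE // (lt_le_trans x0).
  rewrite -!invr_natrM_lnM_expR //; apply/andP; split; apply: mono => //.
    by rewrite mulr_gt0 ?expR_gt0.
  by rewrite (lt_le_trans _ (lower m)) // mulr_gt0 ?expR_gt0.
- by rewrite -[X in _ --> X]addr0; apply: cvgD; [exact: cvg_cst | exact: cvg_invr_natrM (cvg_cst _)].
- by rewrite -[X in _ --> X]addr0; apply: cvgD; [exact: cvg_cst | exact: cvg_invr_natrM (cvg_cst _)].
Unshelve. all: by end_near.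
Qed.

Lemma cvg_sum_dominant (V : normedModType R) (T : Type) (F : set_system T) {FF : Filter F}
    (K : finType) (f : K -> T -> R) (k0 : K) (a : K -> V) :
  (forall t, f k0 t = 1) -> (forall k, k != k0 -> f k @ F --> 0) ->
  (fun t => \sum_k f k t *: a k) @ F --> a k0.
Proof.
move=> f0 f_cvg0; have -> : a k0 = \sum_k (if k == k0 then 1 else 0) *: a k.
  rewrite (bigD1 k0) //= eqxx scale1r big1 ?addr0 // => k /negbTE ->.
  by rewrite scale0r.
apply: cvg_big => [|k _]; first exact: add_continuous.
apply: cvgZ; last exact: cvg_cst.
case: eqP => [->|/eqP /f_cvg0 //].
by rewrite (_ : f k0 = fun=> 1); [exact: cvg_cst | apply/funext].
Qed.

End LogSumExp.

Section Cross2.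
Variable R : comNzRingType.
Implicit Types x y : 'cV[R]_2.

Definition cross2 x y : R := x 0 0 * y 1 0 - x 1 0 * y 0 0.

(* The Cauchy--Binet formula for a sum of rank-one matrices. *)
Lemma det_sum_outer (K : finType) (c : K -> R) (w : K -> 'cV[R]_2) :
  2 * \det (\sum_k c k *: (w k *m (w k)^T)) =
  \sum_k \sum_l c k * c l * cross2 (w k) (w l) ^+ 2.
Proof.
have entry i j : (\sum_k c k *: (w k *m (w k)^T)) i j = \sum_k c k * (w k i 0 * w k j 0).
  by rewrite summxE; apply: eq_bigr => k _; rewrite !mxE big_ord1 !mxE.
set T := fun k l => c k * (w k 0 0 * w k 0 0) * (c l * (w l 1 0 * w l 1 0)).
set U := fun k l => c k * (w k 0 0 * w k 1 0) * (c l * (w l 0 0 * w l 1 0)).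
have -> : \sum_k \sum_l c k * c l * cross2 (w k) (w l) ^+ 2 =
          \sum_k \sum_l (T k l + T l k - 2 * U k l).
  by apply: eq_bigr => k _; apply: eq_bigr => l _; rewrite /cross2 /T /U; ring.
have -> : \sum_k \sum_l (T k l + T l k - 2 * U k l) =
          2 * \sum_k \sum_l T k l - 2 * \sum_k \sum_l U k l.
  rewrite (eq_bigr (fun k => \sum_l T k l + \sum_l T l k - 2 * \sum_l U k l)); last first.
    by move=> k _; rewrite sumrB big_split /= mulr_sumr.
  by rewrite sumrB big_split /= -mulr_sumr [\sum_k \sum_l T l k]exchange_big /=; ring.
rewrite det2 !entry !big_distrlr /=.
have -> : \sum_k \sum_l c k * (w k 0 0 * w k 1 0) * (c l * (w l 1 0 * w l 0 0)) =
          \sum_k \sum_l U k l.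
  by apply: eq_bigr => k _; apply: eq_bigr => l _; rewrite /U; ring.
by ring.
Qed.

End Cross2.

Section UnitVectors.
Variable R : realType.
Implicit Types (x y u : 'cV[R]_2) (phi : R).

Lemma cross2_aligned x y u : aligned x u -> aligned y u -> cross2 x y = 0.
Proof. by rewrite /cross2 => -[] -> [] ->; rewrite ?mxE; ring. Qed.

Lemma aligned_of_cross2_eq0 x y :
  x 0 0 ^+ 2 + x 1 0 ^+ 2 = 1 -> y 0 0 ^+ 2 + y 1 0 ^+ 2 = 1 ->
  cross2 x y = 0 -> aligned y x.
Proof.
rewrite /cross2 => ux uy cr; set k := x 0 0 * y 0 0 + x 1 0 * y 1 0.
have : k ^+ 2 + (x 0 0 * y 1 0 - x 1 0 * y 0 0) ^+ 2 =
       (x 0 0 ^+ 2 + x 1 0 ^+ 2) * (y 0 0 ^+ 2 + y 1 0 ^+ 2) by rewrite /k; ring.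
rewrite cr ux uy expr0n addr0 mulr1 => /eqP; rewrite sqrf_eq1.
have y0 : y 0 0 = k * x 0 0.
  apply/eqP; rewrite -subr_eq0; apply/eqP.
  transitivity (y 0 0 * (1 - (x 0 0 ^+ 2 + x 1 0 ^+ 2)) -
                x 1 0 * (x 0 0 * y 1 0 - x 1 0 * y 0 0)); first by rewrite /k; ring.
  by rewrite ux cr subrr !mulr0 subr0.
have y1 : y 1 0 = k * x 1 0.
  apply/eqP; rewrite -subr_eq0; apply/eqP.
  transitivity (y 1 0 * (1 - (x 0 0 ^+ 2 + x 1 0 ^+ 2)) +
                x 0 0 * (x 0 0 * y 1 0 - x 1 0 * y 0 0)); first by rewrite /k; ring.
  by rewrite ux cr subrr !mulr0 addr0.
have yE : y = k *: x.
  by apply/matrixP => i j; rewrite mxE (ord1 j); case: (ord2P i) => ->.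
by case/orP => /eqP k1; [left | right]; rewrite yE k1 ?scale1r ?scaleN1r.
Qed.

Lemma uvec_unit phi : uvec phi 0 0 ^+ 2 + uvec phi 1 0 ^+ 2 = 1.
Proof. by rewrite !mxE cos2Dsin2. Qed.

Lemma vvec_unit phi : vvec phi 0 0 ^+ 2 + vvec phi 1 0 ^+ 2 = 1.
Proof. by rewrite !mxE sqrrN addrC cos2Dsin2. Qed.

Lemma cross2_uvec_vvec phi : cross2 (uvec phi) (vvec phi) = 1.
Proof. by rewrite /cross2 !mxE /= mulrN opprK -!expr2 cos2Dsin2. Qed.

Lemma not_aligned_vvec_uvec phi : ~ aligned (vvec phi) (uvec phi).
Proof.
move=> al; have := cross2_aligned (or_introl erefl) al.
by rewrite cross2_uvec_vvec => /eqP; rewrite oner_eq0.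
Qed.

Lemma mxtrace_outer x : \tr (x *m x^T) = x 0 0 ^+ 2 + x 1 0 ^+ 2.
Proof. by rewrite mxtrace2 !mxE !big_ord1 !mxE -!expr2. Qed.

Lemma outer_unit_idem x : x 0 0 ^+ 2 + x 1 0 ^+ 2 = 1 -> x *m x^T * (x *m x^T) = x *m x^T.
Proof.
move=> ux; have xTx : x^T *m x = 1.
  by rewrite [LHS]mx11_scalar -trace_mx11 mxtrace_mulC mxtrace_outer ux.
by change (x *m x^T *m (x *m x^T) = x *m x^T); rewrite mulmxA -(mulmxA x) xTx mulmx1.
Qed.

Lemma eig_outer_unit x : x 0 0 ^+ 2 + x 1 0 ^+ 2 = 1 ->
  [/\ eig_max (x *m x^T) = 1, eig_gap (x *m x^T) = 1 & eigproj (x *m x^T) = x *m x^T].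
Proof.
move=> ux; have tr1 : \tr (x *m x^T) = 1 by rewrite mxtrace_outer.
have sym : (x *m x^T)^T = x *m x^T by rewrite trmx_mul trmxK.
have := eig_idem_comb sym (outer_unit_idem ux) tr1 ltr01.
rewrite scale1r scale0r addr0 => -[max1 min0 ->]; split => //.
by rewrite -eig_maxB_min max1 min0 subr0.
Qed.

Lemma vvec_outer phi :
  vvec phi *m (vvec phi)^T = 1 - uvec phi *m (uvec phi)^T.
Proof.
rewrite !outer_mx22 mx22_1 mx22N mx22D !mxE /=.
by congr mx22; have := cos2Dsin2 phi; rewrite !expr2 => ?; lra.
Qed.

Lemma mexp_spectralZ k l m phi :
  mexp (k *: spectral l m phi) =
  expR (k * l) *: (uvec phi *m (uvec phi)^T) + expR (k * m) *: (vvec phi *m (vvec phi)^T).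
Proof.
by rewrite /spectral vvec_outer scalerDr !scalerA mexp_idem_comb // outer_unit_idem ?uvec_unit.
Qed.

End UnitVectors.

Section ExpSum.
Variables (R : realType) (n : nat) (lam mu phi : 'I_n.+1 -> R).
Hypothesis lam0_unique :
  forall k : 'I_n.+1 * bool, k != (ord0, true) -> eigval lam mu k < lam ord0.

Local Notation K := ('I_n.+1 * bool)%type.
Local Notation k0 := ((ord0, true) : K).
Local Notation nu := (eigval lam mu).
Local Notation w := (eigvec phi).
Local Notation u0 := (uvec (phi ord0)).
Local Notation lam0 := (lam ord0).
Local Notation mus := (mu_star lam mu phi).

Definition expsum (m : nat) : 'M[R]_2 := \sum_k expR (m%:R * nu k) *: (w k *m (w k)^T).
Definition nexpsum (m : nat) : 'M[R]_2 :=
  \sum_k expR (m%:R * (nu k - lam0)) *: (w k *m (w k)^T).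

Lemma eigvec_unit k : w k 0 0 ^+ 2 + w k 1 0 ^+ 2 = 1.
Proof. by case: k => i [] /=; [exact: uvec_unit | exact: vvec_unit]. Qed.

Lemma expsumE m : expsum m = expR (m%:R * lam0) *: nexpsum m.
Proof.
rewrite scaler_sumr; apply: eq_bigr => k _.
by rewrite scalerA -expRD mulrBr addrC subrK.
Qed.

Lemma eigproj_expsum m : eigproj (expsum m) = eigproj (nexpsum m).
Proof. by rewrite expsumE eigprojZ ?expR_gt0. Qed.

Lemma trmx_expsum m : (expsum m)^T = expsum m.
Proof.
rewrite linear_sum; apply: eq_bigr => k _.
by rewrite linearZ /= trmx_mul trmxK.
Qed.

Lemma mxtrace_expsum_gt0 m : 0 < \tr (expsum m).
Proof.
rewrite linear_sum /= (bigD1 k0) //= mxtraceZ mxtrace_outer eigvec_unit mulr1.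
rewrite ltr_pwDl ?expR_gt0 // sumr_ge0 // => k _.
by rewrite mxtraceZ mxtrace_outer eigvec_unit mulr1 expR_ge0.
Qed.

Lemma eigval_le_lam0 k : nu k <= lam0.
Proof. by have [->|/lam0_unique/ltW] := eqVneq k k0. Qed.

Lemma eigval_le_mu_star k : ~ aligned (w k) u0 -> nu k <= mus.
Proof.
move=> nal; apply: le_bigmax_cond; apply/andP; split; last exact/asboolPn.
by apply/eqP => ek; apply: nal; rewrite ek; left.
Qed.

Lemma mu_star_attained : exists2 k, ~ aligned (w k) u0 & nu k = mus.
Proof.
apply: (big_ind (fun x => exists2 k, ~ aligned (w k) u0 & nu k = x)).
- by exists (ord0, false); first exact: not_aligned_vvec_uvec.
- move=> x y [kx nax <-] [ky nay <-].
  by case: (leP (nu kx) (nu ky)) => _; [exists ky | exists kx].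
- by move=> k /andP[_ /asboolPn]; exists k.
Qed.

Lemma eigvalD_le k l : cross2 (w k) (w l) != 0 -> nu k + nu l <= lam0 + mus.
Proof.
move=> cr; have := eigval_le_lam0 k; have := eigval_le_lam0 l.
case: (asboolP (aligned (w k) u0)) => [alk|/eigval_le_mu_star]; last lra.
have /eigval_le_mu_star : ~ aligned (w l) u0.
  by move=> all; move: cr; rewrite (cross2_aligned alk all) eqxx.
lra.
Qed.

Let pair_weight (p : K * K) : R := 2^-1 * cross2 (w p.1) (w p.2) ^+ 2.
Let pair_eigval (p : K * K) : R := nu p.1 + nu p.2.

Lemma det_expsum m :
  \det (expsum m) = \sum_(p : K * K) pair_weight p * expR (m%:R * pair_eigval p).
Proof.
have two0 : (2 : R) != 0 by rewrite pnatr_eq0.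
apply: (mulfI two0); rewrite det_sum_outer pair_bigA mulr_sumr.
by apply: eq_bigr => -[k l] _; rewrite /pair_weight /pair_eigval /= mulrDr expRD; field.
Qed.

Lemma pair_weight_ge0 p : 0 <= pair_weight p.
Proof. by rewrite mulr_ge0 ?invr_ge0 ?ler0n ?sqr_ge0. Qed.

Lemma pair_weight_gt0 p : (0 < pair_weight p) = (cross2 (w p.1) (w p.2) != 0).
Proof. by rewrite pmulr_rgt0 ?invr_gt0 ?ltr0n // exprn_even_gt0 /=. Qed.

Lemma pair_mu_star : exists2 p, 0 < pair_weight p & pair_eigval p = lam0 + mus.
Proof.
have [k nal nuk] := mu_star_attained; exists (k0, k); last by rewrite /pair_eigval nuk.
rewrite pair_weight_gt0; apply/eqP => /(aligned_of_cross2_eq0 (eigvec_unit k0) (eigvec_unit k)).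
exact: nal.
Qed.

Lemma det_expsum_gt0 m : 0 < \det (expsum m).
Proof.
have [p wp _] := pair_mu_star; rewrite det_expsum (bigD1 p) //=.
apply: (lt_le_trans (_ : 0 < pair_weight p * expR (m%:R * pair_eigval p))).
  by rewrite mulr_gt0 ?expR_gt0.
by rewrite lerDl sumr_ge0 // => q _; rewrite mulr_ge0 ?pair_weight_ge0 ?expR_ge0.
Qed.

Lemma eig_min_expsum_gt0 m : 0 < eig_min (expsum m).
Proof. by rewrite eig_min_gt0 ?trmx_expsum ?mxtrace_expsum_gt0 ?det_expsum_gt0. Qed.

Lemma cvg_ln_det_expsum :
  (fun m : nat => m%:R^-1 * ln (\det (expsum m))) @ \oo --> lam0 + mus.
Proof.
have [p wp ep] := pair_mu_star; rewrite -ep.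
under eq_fun do rewrite det_expsum.
apply: cvg_ln_sum_expR => // [q|q]; first exact: pair_weight_ge0.
by rewrite pair_weight_gt0 ep => /eigvalD_le.
Qed.

Lemma cvg_nexpsum : nexpsum @ \oo --> w k0 *m (w k0)^T.
Proof.
apply: cvg_sum_dominant => [m|k /lam0_unique]; first by rewrite subrr mulr0 expR0.
by rewrite -subr_lt0; exact: cvg_expR_natrM.
Qed.

Lemma cvg_eigproj_nexpsum :
  (fun m => eigproj (nexpsum m)) @ \oo --> w k0 *m (w k0)^T.
Proof.
have [_ gap1 <-] := eig_outer_unit (eigvec_unit k0).
by apply: cvg_eigproj cvg_nexpsum _; rewrite gap1 oner_neq0.
Qed.

Lemma cvg_ln_eig_max_expsum :
  (fun m : nat => m%:R^-1 * ln (eig_max (expsum m))) @ \oo --> lam0.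
Proof.
have [max1 _ _] := eig_outer_unit (eigvec_unit k0).
have max_gt0 m : 0 < eig_max (nexpsum m).
  rewrite -(pmulr_rgt0 _ (expR_gt0 (m%:R * lam0))) -eig_maxZ ?expR_ge0 // -expsumE.
  exact: lt_le_trans (eig_min_expsum_gt0 m) (eig_min_le_max _).
have shifted : (fun m : nat => lam0 + m%:R^-1 * ln (eig_max (nexpsum m))) @ \oo --> lam0.
  rewrite -[X in _ --> X]addr0; apply: cvgD; first exact: cvg_cst.
  apply: (@cvg_invr_natrM _ (fun m => ln (eig_max (nexpsum m))) (ln 1)).
  apply: (@continuous_cvg _ _ _ _ _ (fun m => eig_max (nexpsum m)) (@ln R) (1 : R)).
    exact: continuous_ln.
  by rewrite -max1; exact: cvg_eig_max cvg_nexpsum.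
apply: cvg_trans shifted; apply: near_eq_cvg; near=> m.
rewrite expsumE eig_maxZ ?expR_ge0 // invr_natrM_lnM_expR ?max_gt0 //.
by near: m; exists 1%N.
Unshelve. all: by end_near.
Qed.

Lemma cvg_ln_eig_min_expsum :
  (fun m : nat => m%:R^-1 * ln (eig_min (expsum m))) @ \oo --> mus.
Proof.
have -> : (fun m : nat => m%:R^-1 * ln (eig_min (expsum m))) =
          (fun m : nat => m%:R^-1 * ln (\det (expsum m)) - m%:R^-1 * ln (eig_max (expsum m))).
  apply/funext => m; have min_gt0 := eig_min_expsum_gt0 m.
  have max_gt0 := lt_le_trans min_gt0 (eig_min_le_max (expsum m)).
  by rewrite -mulr_eig_max_min ?trmx_expsum // [ln (eig_max _ * _)]lnM ?posrE //; ring.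
rewrite (_ : mus = lam0 + mus - lam0); last by rewrite addrAC subrr add0r.
by apply: cvgB; [exact: cvg_ln_det_expsum | exact: cvg_ln_eig_max_expsum].
Qed.

End ExpSum.

Lemma sum_mexp_expsum (R : realType) (n : nat) (X : 'I_n.+1 -> 'M[R]_2)
    (lam mu phi : 'I_n.+1 -> R) :
  (forall i, X i = spectral (lam i) (mu i) (phi i)) ->
  forall m : nat, \sum_(i < n.+1) mexp (m%:R *: X i) = expsum lam mu phi m.
Proof.
move=> X_spectral m; rewrite /expsum (eq_bigr (fun i => \sum_(b : bool)
  expR (m%:R * eigval lam mu (i, b)) *: (eigvec phi (i, b) *m (eigvec phi (i, b))^T))).
  by rewrite pair_bigA; apply: eq_bigr => -[i b].
by move=> i _; rewrite big_bool /= X_spectral mexp_spectralZ.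
Qed.

Theorem theorem1 (R : realType) (n : nat) (X : 'I_n.+1 -> 'M[R]_2)
  (lam mu phi : 'I_n.+1 -> R)
  (hspec : forall i, X i = spectral (lam i) (mu i) (phi i))
  (horder : forall i, mu i <= lam i)
  (hphi : forall i, - (pi / 2) <= phi i <= pi / 2)
  (hunique : forall k : 'I_n.+1 * bool, k != (ord0, true) ->
               eigval lam mu k < lam ord0) :
  (fun m : nat => m%:R^-1 *: mlog (\sum_(i < n.+1) mexp (m%:R *: X i))) @ \oo
    --> spectral (lam ord0) (mu_star lam mu phi) (phi ord0).
Proof.
have -> : (fun m : nat => m%:R^-1 *: mlog (\sum_(i < n.+1) mexp (m%:R *: X i))) =
  fun m : nat =>
    (m%:R^-1 * ln (eig_max (expsum lam mu phi m))) *: eigproj (nexpsum lam mu phi m) +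
    (m%:R^-1 * ln (eig_min (expsum lam mu phi m))) *: (1 - eigproj (nexpsum lam mu phi m)).
  apply/funext => m; rewrite (sum_mexp_expsum hspec) mlog_sym ?trmx_expsum ?eig_min_expsum_gt0 //.
  by rewrite /log_sym eigproj_expsum scalerDr !scalerA.
rewrite /spectral vvec_outer; apply: cvgD; apply: cvgZ.
- exact: cvg_ln_eig_max_expsum.
- exact: cvg_eigproj_nexpsum.
- exact: cvg_ln_eig_min_expsum.
- by apply: cvgB; [exact: cvg_cst | exact: cvg_eigproj_nexpsum].
Qed.
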